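(* For every integer $n \ge 0$, define $\xi : \mathrm{SYT}(\theta^{(n)}) \to \mathcal{P}_n$ as follows. For $T \in \mathrm{SYT}(\theta^{(n)})$, let $H$ be the entry of $T$ in the heart, and let $\xi(T) = p_1 p_2 \cdots p_{2n+2}$, where for each $1 \le i \le 2n+2$: \[ p_i = \begin{cases} \mathsf{E}, & \text{if } i+1 \in \mathrm{arm}(T) \text{ and } i+2 < H;\\ \mathsf{N}, & \text{if } i+1 \in \mathrm{leg}(T) \text{ and } i+2 < H;\\ \mathsf{S}, & \text{if } i+1 \in \mathrm{arm}(T) \text{ and } i+2 = H;\\ \mathsf{W}, & \text{if } i+1 \in \mathrm{leg}(T) \text{ and } i+2 = H;\\ \mathsf{E}, & \text{if } i+2 \in \mathrm{arm}(T) \text{ and } H < i+2;\\ \mathsf{N}, & \text{if } i+2 \in \mathrm{leg}(T) \text{ and } H < i+2. \end{cases} \] Then $\xi(T)$ lies in $\mathcal{P}_n$ for every $T$, and $\xi$ is a bijection.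
   Context: For $n \ge 0$, $\theta^{(n)}$ denotes the integer partition $(n+2, 2, 1^n)$ of $2n+4$ (rows of lengths $n+2$, $2$, and then $n$ rows of length $1$), identified with its Young diagram in English convention (the row of length $n+2$ on top). The \emph{arm} of $\theta^{(n)}$ is its first row (all $n+2$ boxes, including the top-left corner box), the \emph{leg} is its first column (all $n+2$ boxes, including the top-left corner box), and the \emph{heart} is the unique box lying in neither the first row nor the first column (the second box of the second row). $\mathrm{SYT}(\theta^{(n)})$ is the set of standard Young tableaux of shape $\theta^{(n)}$: bijective fillings of the boxes with $1, \dots, 2n+4$ increasing left to right along rows and top to bottom down columns. For a tableau $T$, $\mathrm{arm}(T)$, $\mathrm{leg}(T)$, $\mathrm{heart}(T)$ denote the sets of entries of $T$ in the arm, leg, and heart respectively; ''$k \in \mathrm{arm}(T)$'' means the entry $k$ lies in the arm. $\mathcal{P}_n$ is the set of lattice paths in $\mathbb{Z}^2$ from $(0,0)$ to $(n,n)$ of exactly $2n+2$ steps, each step one of $\mathsf{N} = (0,1)$, $\mathsf{S} = (0,-1)$, $\mathsf{E} = (1,0)$, $\mathsf{W} = (-1,0)$, such that every vertex of the path lies in the closed first quadrant $\{(x,y) : x \ge 0, y \ge 0\}$. Such a path is identified with its word $p_1 p_2 \cdots p_{2n+2}$ of steps in the alphabet $\{\mathsf{N},\mathsf{S},\mathsf{E},\mathsf{W}\}$. *)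

From mathcomp Require Import all_boot all_order all_algebra.
Set Implicit Arguments. Unset Strict Implicit. Unset Printing Implicit Defensive.
Import Order.TTheory GRing.Theory Num.Theory.

(* A tableau is the list of its rows (English convention, top row first). *)
Definition tableau := seq (seq nat).

Definition theta (n : nat) : seq nat := n.+2 :: 2 :: nseq n 1.

Definition is_SYT (sh : seq nat) (t : tableau) : Prop :=
  [/\ map size t = sh,
      perm_eq (flatten t) (iota 1 (sumn sh)),
      all (fun r => sorted ltn r) t &
      forall r c, r.+1 < size t -> c < size (nth [::] t r.+1) ->
        nth 0 (nth [::] t r) c < nth 0 (nth [::] t r.+1) c].

Definition arm (t : tableau) : seq nat := nth [::] t 0.
Definition leg (t : tableau) : seq nat := [seq nth 0 r 0 | r <- t].
Definition heart (t : tableau) : nat := nth 0 (nth [::] t 1) 1.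

Inductive step := stN | stS | stE | stW.

Definition move (v : int * int) (s : step) : int * int :=
  match s with
  | stN => (v.1, v.2 + 1)%R
  | stS => (v.1, v.2 - 1)%R
  | stE => (v.1 + 1, v.2)%R
  | stW => (v.1 - 1, v.2)%R
  end.

Definition vertices (p : seq step) : seq (int * int) :=
  (0, 0)%R :: scanl move (0, 0)%R p.

Definition in_P (n : nat) (p : seq step) : Prop :=
  [/\ size p = (2 * n).+2,
      all (fun v : int * int => (0 <= v.1)%R && (0 <= v.2)%R) (vertices p) &
      foldl move (0, 0)%R p = ((n : int), (n : int))].

(* the step p_i of xi(T); the final default stE is never reached on SYTs *)
Definition xi_step (t : tableau) (i : nat) : step :=
  let H := heart t in
  if (i.+1 \in arm t) && (i.+2 < H) then stE
  else if (i.+1 \in leg t) && (i.+2 < H) then stN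
  else if (i.+1 \in arm t) && (i.+2 == H) then stS
  else if (i.+1 \in leg t) && (i.+2 == H) then stW
  else if (i.+2 \in arm t) && (H < i.+2) then stE
  else if (i.+2 \in leg t) && (H < i.+2) then stN
  else stE.

Definition xi (n : nat) (t : tableau) : seq step :=
  [seq xi_step t i | i <- iota 1 (2 * n).+2].

From mathcomp Require Import all_boot all_order all_algebra zify.
Set Implicit Arguments. Unset Strict Implicit. Unset Printing Implicit Defensive.

(* Remove the corner entry 1 and the heart H from a tableau of shape theta^(n):
   the remaining entries {2, ..., 2n+4} \ {H}, listed increasingly, are in
   bijection with the 2n+2 steps, and step k of xi(T) only records whether the
   k-th of them lies in the arm (E/S) or in the leg (N/W), the single backward
   step (S/W) marking the position of H.  A tableau is thus determined by its
   heart and its arm, and a word is xi of a tableau iff it has n+1 arm steps,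
   exactly one backward step, and both an arm and a leg step up to that
   backward step; these are exactly the conditions defining P_n, because the
   only vertex that can leave the quadrant is the one right after the backward
   step, and the end point (n, n) forces n+1 arm steps and one backward step. *)

(** * Steps and lattice paths *)

Definition isE (s : step) := if s is stE then true else false.
Definition isN (s : step) := if s is stN then true else false.
Definition isS (s : step) := if s is stS then true else false.
Definition isW (s : step) := if s is stW then true else false.

Definition armstep (s : step) := match s with stE | stS => true | _ => false end.
Definition backstep (s : step) := match s with stS | stW => true | _ => false end.

Definition code_step (back arm : bool) : step :=
  if back then (if arm then stS else stW) else (if arm then stE else stN).

Lemma code_stepK s : code_step (backstep s) (armstep s) = s.
Proof. by case: s. Qed.

Lemma armstep_code back arm : armstep (code_step back arm) = arm.
Proof. by case: back; case: arm. Qed.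

Lemma backstep_code back arm : backstep (code_step back arm) = back.
Proof. by case: back; case: arm. Qed.

Lemma foldl_move v q : foldl move v q =
  (v.1 + (count isE q)%:Z - (count isW q)%:Z, v.2 + (count isN q)%:Z - (count isS q)%:Z)%R.
Proof.
elim: q v => [|s q IHq] [x y] /=; first by congr pair; lia.
by rewrite IHq; case: s => /=; congr pair; lia.
Qed.

Lemma count_steps q : [/\ count armstep q = count isE q + count isS q,
  count backstep q = count isS q + count isW q &
  size q = count isE q + count isN q + count isS q + count isW q].
Proof. by elim: q => [|s q [IHa IHb IHs]] //=; case: s => /=; split; lia. Qed.

Lemma cons_scanlE (T1 T2 : Type) (g : T1 -> T2 -> T1) x s :
  x :: scanl g x s = [seq foldl g x (take m s) | m <- iota 0 (size s).+1].
Proof.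
elim: s x => [|y s IHs] x //.
have -> : iota 0 (size (y :: s)).+1 = 0 :: map succn (iota 0 (size s).+1).
  by rewrite -(iotaDl 1).
by rewrite [LHS]/= IHs /= -map_comp.
Qed.

Lemma count_take_le (T : Type) (a : pred T) m s : count a (take m s) <= count a s.
Proof. by rewrite -{2}(cat_take_drop m s) count_cat leq_addr. Qed.

Lemma has_take_mono (T : Type) (a : pred T) i j s :
  i <= j -> has a (take i s) -> has a (take j s).
Proof.
by move=> ij; rewrite -(take_takel s ij) => hi; rewrite -[take j s](cat_take_drop i) has_cat hi.
Qed.

Lemma has_take_nth (T : Type) (a : pred T) x0 s m k :
  k < m -> k < size s -> a (nth x0 s k) -> has a (take m s).
Proof.
by move=> km ks ak; apply/(has_nthP x0); exists k; rewrite ?size_take_min ?leq_min ?nth_take ?km.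
Qed.

Definition nonneg_vertex (v : int * int) := (0 <= v.1)%R && (0 <= v.2)%R.

Lemma nonneg_foldl_move q : count backstep q <= 1 ->
  nonneg_vertex (foldl move (0, 0)%R q) =
  (count backstep q == 0) || has armstep q && has (predC armstep) q.
Proof.
rewrite /nonneg_vertex foldl_move !has_count; have [cA cB cS] := count_steps q.
have cL : count (predC armstep) q = count isN q + count isW q.
  by have := count_predC armstep q; lia.
move=> back1 /=; rewrite cL.
case: eqP => [B0|/eqP B1] /=; apply/idP/idP; lia.
Qed.

Definition back_prefix p := take (find backstep p).+1 p.

Lemma nonneg_vertices_single_back p : count backstep p = 1 ->
  all nonneg_vertex (vertices p) =
  has armstep (back_prefix p) && has (predC armstep) (back_prefix p).
Proof.
move=> back1; rewrite /vertices cons_scanlE all_map /back_prefix.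
set k0 := find backstep p.
have backp : has backstep p by rewrite has_count back1.
have back_take m : count backstep (take m p) = (k0 < m).
  have := count_take_le backstep m p; rewrite back1 -(has_take m backp) has_count.
  by case: (count _ _) => [|[]].
apply/allP/idP => [|/andP[armk0 legk0] m].
  move=> /(_ k0.+1); rewrite mem_iota add0n ltnS -has_find backp => /(_ isT) /=.
  by rewrite nonneg_foldl_move back_take ?leq_b1 ?ltnSn.
rewrite mem_iota => _ /=; rewrite nonneg_foldl_move back_take ?leq_b1 //.
case: ltnP => //= k0m.
by rewrite (has_take_mono k0m armk0) (has_take_mono k0m legk0).
Qed.

Lemma in_PE n p : in_P n p <->
  [/\ size p = (2 * n).+2, count armstep p = n.+1, count backstep p = 1 &
      has armstep (back_prefix p) && has (predC armstep) (back_prefix p)].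
Proof.
have [cA cB cS] := count_steps p.
rewrite /in_P foldl_move.
split=> [[sp nonneg [eE eN]] | [sp arm1 back1 pre]].
  have back1 : count backstep p = 1 by lia.
  by split=> //; [lia | rewrite -nonneg_vertices_single_back].
split=> //; first by rewrite -/nonneg_vertex nonneg_vertices_single_back.
by congr (_, _) => /=; lia.
Qed.

Lemma backstep_nth p k : count backstep p = 1 -> k < size p ->
  backstep (nth stE p k) = (k == find backstep p).
Proof.
move=> back1 kp; case: ltngtP => [kf|fk|->]; first exact: before_find.
  apply/negbTE/negP => backk.
  have : 0 < count backstep (take k p) by rewrite -has_count has_take_leq ?(ltnW kp).
  have : 0 < count backstep (drop k p).
    rewrite -has_count; apply/(has_nthP stE).
    by exists 0; rewrite ?size_drop ?subn_gt0 ?nth_drop ?addn0.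
  by move: back1; rewrite -{1}[p](cat_take_drop k) count_cat; lia.
by rewrite nth_find // has_count back1.
Qed.

(* The heart of the tableau encoded by p: the backward step p_i has i+2 = H. *)
Definition path_heart p := (find backstep p).+3.

Lemma path_heart_le p : count backstep p = 1 -> path_heart p <= (size p).+2.
Proof.
move=> back1; have : find backstep p < size p by rewrite -has_find has_count back1.
by rewrite /path_heart; lia.
Qed.

Lemma back_prefix_witness (a : pred step) p : has a (back_prefix p) ->
  exists k, [/\ k < size p, k.+3 <= path_heart p & a (nth stE p k)].
Proof.
case/(has_nthP stE) => k; rewrite size_take_min leq_min => /andP[kf kp].
by rewrite nth_take // => ak; exists k.
Qed.

(** * Relabelling the entries other than 1 and the heart *)

(* [entry h k] is the k-th element (counting from 0) of {2, 3, ...} \ {h}. *)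
Definition entry (h k : nat) := (bump (h - 2) k).+2.
Definition entry_index (h j : nat) := unbump (h - 2) (j - 2).

Lemma entryE h k : entry h k = if k.+3 <= h then k.+2 else k.+3.
Proof. by rewrite /entry /bump; case: ifP => hk; case: leqP => hk2 /=; lia. Qed.

Lemma entryK h : cancel (entry h) (entry_index h).
Proof. by move=> k; rewrite /entry_index /entry !subn2 /= bumpK. Qed.

Lemma entry_indexK h j : 1 < h -> 1 < j -> j != h -> entry h (entry_index h j) = j.
Proof.
move=> h1 j1 /eqP jh; rewrite /entry /entry_index unbumpKcond.
have /negbTE-> : j - 2 != h - 2 by apply/eqP; lia.
by rewrite add0n; lia.
Qed.

Lemma entry_neq h k : entry h k != h.
Proof. by rewrite entryE; case: ifP => hk; apply/eqP; lia. Qed.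

Lemma ltn_entry h : {mono entry h : i j / i < j}.
Proof. by move=> i j; rewrite !entryE; case: ifP => hi; case: ifP => hj; lia. Qed.

Lemma entry_le h N k : h <= N.+2 -> k < N -> entry h k <= N.+2.
Proof. by rewrite entryE; case: ifP => hk; lia. Qed.

Lemma entry_index_lt h N j : 1 < h <= N.+2 -> 1 < j <= N.+2 -> j != h ->
  entry_index h j < N.
Proof. by rewrite /entry_index /unbump; case: (ltnP (h - 2) (j - 2)) => hj; lia. Qed.

Definition entries h N (P : pred nat) := [seq entry h k | k <- iota 0 N & P k].

Lemma mem_entries h N P j : 1 < h ->
  (j \in entries h N P) = [&& 1 < j, j != h, entry_index h j < N & P (entry_index h j)].
Proof.
move=> h1; apply/mapP/and4P => [[k] | [j1 jh jN Pj]].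
  by rewrite mem_filter mem_iota => /andP[Pk kN] ->; rewrite entryK entry_neq.
by exists (entry_index h j); rewrite ?entry_indexK // mem_filter Pj mem_iota.
Qed.

Lemma eq_entries h N (P Q : pred nat) : (forall k, k < N -> P k = Q k) ->
  entries h N P = entries h N Q.
Proof.
move=> PQ; rewrite /entries; congr map; apply: eq_in_filter => k.
by rewrite mem_iota => /andP[_ /PQ].
Qed.

Lemma sorted_entries h N P : sorted ltn (1 :: entries h N P).
Proof.
rewrite /= path_min_sorted; last by apply/allP => _ /mapP[k _ ->].
apply: (@homo_sorted _ _ _ ltn) => [i j /=|]; first by rewrite ltn_entry.
by apply: sorted_filter; [exact: ltn_trans | exact: iota_ltn_sorted].
Qed.

Lemma sorted_eq_entries h N s : 1 < h <= N.+2 -> sorted ltn s -> 1 \in s -> h \notin s ->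
  {subset s <= [pred j | 0 < j <= N.+2]} ->
  s = 1 :: entries h N (fun k => entry h k \in s).
Proof.
move=> /andP[h1 hN] ss s1 hs sN.
apply: (irr_sorted_eq ltn_trans ltnn ss (sorted_entries _ _ _)) => j.
rewrite in_cons mem_entries //.
case: (ltngtP j 1) => [|j1|->]; last by rewrite s1.
  by rewrite ltnS leqn0 => /eqP->; apply/negbTE/negP => /sN.
rewrite /=; case: (eqVneq j h) => [->|jh]; first by rewrite (negbTE hs).
rewrite entry_indexK //; case: (boolP (j \in s)) => [js|_]; last by rewrite !andbF.
by rewrite entry_index_lt ?h1 // j1; case/andP: (sN j js).
Qed.

Lemma perm_entries h N : 1 < h <= N.+2 ->
  perm_eq (h :: [seq entry h k | k <- iota 0 N]) (iota 2 N.+1).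
Proof.
move=> /andP[h1 hN]; apply: uniq_perm; last 1 first.
- move=> j; rewrite mem_iota in_cons -(filter_predT (iota 0 N)).
  rewrite -[map _ _]/(entries h N predT) mem_entries //.
  case: (eqVneq j h) => [->|jh] /=; first lia.
  rewrite andbT; case: (ltnP 1 j) => //= j1; apply/idP/idP => [idxN|jN].
    by rewrite -(entry_indexK h1 j1 jh) ltnS entry_le.
  by rewrite entry_index_lt ?h1 ?j1 //; lia.
- rewrite cons_uniq map_inj_uniq ?iota_uniq ?andbT; last exact: can_inj (@entryK h).
  by apply/mapP => -[k _ /eqP]; rewrite eq_sym (negbTE (entry_neq h k)).
- exact: iota_uniq.
Qed.

Lemma perm_entriesC h N (P : pred nat) :
  perm_eq (entries h N P ++ entries h N (predC P)) [seq entry h k | k <- iota 0 N].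
Proof. by rewrite -map_cat perm_map // perm_filterC. Qed.

Lemma entries_head_lt h N (P : pred nat) k :
  k < N -> k.+3 <= h -> P k -> nth 0 (entries h N P) 0 < h.
Proof.
move=> kN kh Pk; have : entry h k \in entries h N P by rewrite map_f // mem_filter Pk mem_iota.
have := path_sorted (sorted_entries h N P).
case: (entries h N P) => [//|x s] /= /(order_path_min ltn_trans) /allP xs.
rewrite in_cons entryE kh => /orP[/eqP<- //| /xs]; lia.
Qed.

(** * Standard tableaux of shape theta^(n) *)

Definition theta_tab (r : seq nat) (b h : nat) (L : seq nat) : tableau :=
  r :: [:: b; h] :: [seq [:: x] | x <- L].

Definition columns_increase (t : tableau) : Prop :=
  forall i c, i.+1 < size t -> c < size (nth [::] t i.+1) ->
    nth 0 (nth [::] t i) c < nth 0 (nth [::] t i.+1) c.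

Lemma rows_size1 (rows : seq (seq nat)) m : map size rows = nseq m 1 ->
  exists2 L, rows = [seq [:: x] | x <- L] & size L = m.
Proof.
elim: rows m => [|row rows IHrows] [|m] //=; first by exists [::].
case: row => [|x [|]] //= [/IHrows[L -> <-]].
by exists (x :: L).
Qed.

Lemma theta_shape n T : map size T = theta n ->
  exists r b h L, [/\ T = theta_tab r b h L, size r = n.+2 & size L = n].
Proof.
case: T => [|r [|[|b [|h [|]]] rows]] //= [sr /rows_size1[L -> sL]].
by exists r, b, h, L.
Qed.

Lemma leg_theta_tab r b h L : leg (theta_tab r b h L) = [:: nth 0 r 0, b & L].
Proof. by rewrite /leg /= -map_comp map_id. Qed.

Lemma theta_columnsP r b h L :
  columns_increase (theta_tab r b h L) <->
  sorted ltn (leg (theta_tab r b h L)) /\ nth 0 r 1 < h.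
Proof.
set T := theta_tab r b h L.
have sT : size T = (size L).+2 by rewrite /T /= size_map.
have legE i : i < size T -> nth 0 (leg T) i = nth 0 (nth [::] T i) 0.
  by move=> iT; rewrite (nth_map [::]).
have rowE i : i < size L -> nth [::] T i.+2 = [:: nth 0 L i].
  by move=> iL; rewrite /T /= (nth_map 0).
split=> [col | [/(sortedP 0) legS rh] [|i] c iT].
- split; last exact: (col 0 1).
  apply/(sortedP 0) => i; rewrite size_map => iT.
  rewrite !legE ?(ltnW iT) //; apply: col => //.
  case: i iT => [//|i] iT; rewrite rowE //; rewrite sT in iT; lia.
- case: c => [|[|c]] // _.
  by rewrite -!legE //; apply: legS; rewrite size_map.
- have iL : i < size L by rewrite sT in iT; lia.
  rewrite rowE //; case: c => // _; rewrite -rowE //.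
  by rewrite -!legE ?(ltnW iT) //; apply: legS; rewrite size_map.
Qed.

Lemma is_SYT_thetaP n r b h L : size r = n.+2 -> size L = n ->
  is_SYT (theta n) (theta_tab r b h L) <->
  [/\ perm_eq (r ++ b :: h :: L) (iota 1 (2 * n).+4), sorted ltn r,
      sorted ltn [:: nth 0 r 0, b & L], nth 0 r 1 < h & b < h].
Proof.
move=> sr sL; rewrite -(leg_theta_tab r b h L).
have shapeT : map size (theta_tab r b h L) = theta n.
  by rewrite /theta /= sr -sL; congr [:: _, _ & _]; elim: (L) => //= x L2 ->.
have flatT : flatten (theta_tab r b h L) = r ++ b :: h :: L by rewrite /= flatten_seq1.
have sumT : sumn (theta n) = (2 * n).+4 by rewrite /= sumn_nseq; lia.
have rowsT : all (sorted ltn) (theta_tab r b h L) = sorted ltn r && (b < h).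
  have singl : all (sorted ltn) [seq [:: x] | x <- L] by apply/allP => _ /mapP[x _ ->].
  by rewrite /= singl !andbT.
rewrite /is_SYT flatT sumT rowsT; split.
  by case=> _ perm /andP[rs bh] /theta_columnsP[legS rh].
by case=> perm rs legS rh bh; split; rewrite ?rs ?bh //; apply/theta_columnsP.
Qed.

Lemma head_leq_mem (x : nat) s y : sorted ltn (x :: s) -> y \in x :: s -> x <= y.
Proof.
move=> /= /(order_path_min ltn_trans) /allP xs.
by rewrite in_cons => /orP[/eqP-> // | /xs /ltnW].
Qed.

(** * The encoding xi and its inverse *)

(* xi of a tableau with heart h and arm A, read on its first N steps (see xi_theta). *)
Definition code h (A : seq nat) N :=
  [seq code_step (k.+3 == h) (entry h k \in A) | k <- iota 0 N].

Lemma size_code h A N : size (code h A N) = N.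
Proof. by rewrite size_map size_iota. Qed.

Lemma nth_code h A N k : k < N ->
  nth stE (code h A N) k = code_step (k.+3 == h) (entry h k \in A).
Proof. by move=> kN; rewrite (nth_map 0) ?size_iota // nth_iota. Qed.

Lemma xi_stepE T k :
  (entry (heart T) k \in arm T) || (entry (heart T) k \in leg T) ->
  xi_step T k.+1 = code_step (k.+3 == heart T) (entry (heart T) k \in arm T).
Proof.
rewrite /xi_step entryE; case: (ltngtP k.+3 (heart T)) => _;
  by rewrite !andbT !andbF; case: (_ \in arm T) => //= ->.
Qed.

Lemma count_armstep_code h A N :
  count armstep (code h A N) = size (entries h N (fun k => entry h k \in A)).
Proof.
rewrite size_map size_filter count_map.
by apply: eq_count => k; rewrite /= armstep_code.
Qed.

Lemma count_backstep_code h A N : 3 <= h <= N.+2 -> count backstep (code h A N) = 1.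
Proof.
move=> hN; rewrite count_map (eq_count (a2 := pred1 (h - 3))); last first.
  by move=> k /=; rewrite backstep_code; apply/eqP/eqP; lia.
by rewrite count_uniq_mem ?iota_uniq // mem_iota; case/andP: hN => h3 hN; rewrite /= add0n; lia.
Qed.

Lemma path_heart_code h A N : 3 <= h <= N.+2 -> path_heart (code h A N) = h.
Proof.
move=> /andP[h3 hN]; rewrite /path_heart /code find_map.
rewrite (eq_find (_ : _ =1 pred1 (h - 3))); last first.
  by move=> k /=; rewrite backstep_code; apply/eqP/eqP; lia.
have h3N : h - 3 < size (iota 0 N) by rewrite size_iota; lia.
have := index_uniq 0 h3N (iota_uniq 0 N).
rewrite nth_iota ?add0n /index => [->|]; [lia | by rewrite size_iota in h3N].
Qed.

Lemma has_back_prefix_code (a : pred step) h A N k : 3 <= h <= N.+2 -> k.+3 <= h ->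
  a (code_step (k.+3 == h) (entry h k \in A)) -> has a (back_prefix (code h A N)).
Proof.
move=> hN kh ak; have := path_heart_code A hN; rewrite /back_prefix /path_heart => hk.
rewrite (_ : find _ _ = h - 3); last lia.
by apply: (has_take_nth (x0 := stE) (k := k)); rewrite ?size_code ?nth_code //; lia.
Qed.

Definition path_entries (a : pred step) p :=
  1 :: entries (path_heart p) (size p) (fun k => a (nth stE p k)).

Definition tab_of_path p : tableau :=
  let leg := path_entries (predC armstep) p in
  theta_tab (path_entries armstep p) (nth 0 leg 1) (path_heart p) (drop 2 leg).

Lemma size_path_entries a p : size (path_entries a p) = (count a p).+1.
Proof. by rewrite /= size_map size_filter -[in RHS](mkseq_nth stE p) count_map. Qed.

Lemma path_entries_code a h A N : 3 <= h <= N.+2 ->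
  path_entries a (code h A N) =
  1 :: entries h N (fun k => a (code_step (k.+3 == h) (entry h k \in A))).
Proof.
move=> hN; rewrite /path_entries path_heart_code // size_code.
by congr (_ :: _); apply: eq_entries => k kN; rewrite nth_code.
Qed.

Lemma arm_entries_code h A N : 3 <= h <= N.+2 ->
  path_entries armstep (code h A N) = 1 :: entries h N (fun k => entry h k \in A).
Proof.
move=> hN; rewrite path_entries_code //.
by congr (_ :: _); apply: eq_entries => k _; rewrite armstep_code.
Qed.

Lemma leg_entries_code h A N : 3 <= h <= N.+2 ->
  path_entries (predC armstep) (code h A N) = 1 :: entries h N (fun k => entry h k \notin A).
Proof.
move=> hN; rewrite path_entries_code //.
by congr (_ :: _); apply: eq_entries => k _; rewrite /= armstep_code.
Qed.

Lemma code_path_entries p : count backstep p = 1 ->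
  code (path_heart p) (path_entries armstep p) (size p) = p.
Proof.
move=> back1; rewrite /code -[RHS](mkseq_nth stE p) /mkseq.
apply/eq_in_map => k; rewrite mem_iota /= => kp.
rewrite in_cons mem_entries // entryK entry_neq kp /=.
by rewrite /path_heart !eqSS -backstep_nth // code_stepK.
Qed.

Section ThetaTableau.

Variables (n : nat) (r : seq nat) (b h : nat) (L : seq nat).
Hypotheses (sr : size r = n.+2) (sL : size L = n).
Hypothesis syt : is_SYT (theta n) (theta_tab r b h L).

Let syt_facts := (is_SYT_thetaP b h sr sL).1 syt.

Lemma mem_theta_tab j : (j \in r ++ b :: h :: L) = (0 < j <= (2 * n).+4).
Proof.
have [perm _ _ _ _] := syt_facts.
by rewrite (perm_mem perm) mem_iota; lia.
Qed.

Lemma uniq_theta_tab : uniq (r ++ b :: h :: L).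
Proof.
have [perm _ _ _ _] := syt_facts.
by rewrite (perm_uniq perm) iota_uniq.
Qed.

Lemma theta_arm01 : nth 0 r 0 < nth 0 r 1.
Proof.
have [_ rS _ _ _] := syt_facts.
by apply: (sorted_ltn_nth ltn_trans 0 rS); rewrite ?inE ?sr.
Qed.

Lemma theta_corner : nth 0 r 0 = 1.
Proof.
have [_ rS legS rh bh] := syt_facts; have r01 := theta_arm01.
have r0_min j : j \in r ++ b :: h :: L -> nth 0 r 0 <= j.
  rewrite mem_cat !in_cons => /or4P[jr | /eqP-> | /eqP-> | jL].
  - by case: r sr rS jr {r01 rh} => // r0 r' _; apply: head_leq_mem.
  - by apply: (head_leq_mem legS); rewrite !inE eqxx orbT.
  - lia.
  - by apply: (head_leq_mem legS); rewrite !inE jL !orbT.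
have := r0_min 1; rewrite mem_theta_tab => /(_ isT).
have := mem_theta_tab (nth 0 r 0); rewrite mem_cat mem_nth ?sr //=; lia.
Qed.

Lemma theta_heart_bounds : 3 <= h <= (2 * n).+4.
Proof.
have [_ _ _ rh _] := syt_facts; have := theta_arm01; rewrite theta_corner.
by have := mem_theta_tab h; rewrite mem_cat !in_cons eqxx !orbT; lia.
Qed.

Lemma theta_arm_leg_mem j : 1 < j <= (2 * n).+4 -> j != h ->
  (j \notin r) = (j \in [:: 1, b & L]).
Proof.
move=> /andP[j1 jN] jh; have := uniq_theta_tab; rewrite cat_uniq => /and3P[_ rbhL _].
have := mem_theta_tab j; rewrite mem_cat !in_cons (gtn_eqF j1) (negbTE jh) /= ltnW //=.
case: (boolP (j \in r)) => [jr _ | _ /= ->] //; apply/esym/negP => jbL.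
have : j \in [:: b, h & L] by rewrite !in_cons; case/orP: jbL => ->; rewrite ?orbT.
by move=> /(hasPn rbhL); rewrite jr.
Qed.

Lemma theta_arm_entries : r = 1 :: entries h (2 * n).+2 (fun k => entry h k \in r).
Proof.
have [_ rS _ _ _] := syt_facts; have /andP[h3 hN] := theta_heart_bounds.
apply: sorted_eq_entries => //; first by rewrite ltnW.
- by rewrite -theta_corner mem_nth ?sr.
- have := uniq_theta_tab; rewrite cat_uniq => /and3P[_ /hasPn/(_ h)].
  by rewrite !inE eqxx orbT => /(_ isT).
- by move=> j jr; rewrite inE -mem_theta_tab mem_cat jr.
Qed.

Lemma theta_leg_entries :
  [:: 1, b & L] = 1 :: entries h (2 * n).+2 (fun k => entry h k \notin r).
Proof.
have [_ _ legS _ bh] := syt_facts; have /andP[h3 hN] := theta_heart_bounds.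
rewrite [RHS](_ : _ = 1 :: entries h (2 * n).+2 (fun k => entry h k \in [:: 1, b & L])).
  apply: sorted_eq_entries.
  - by rewrite ltnW.
  - by rewrite -theta_corner.
  - exact: mem_head.
  - have := uniq_theta_tab; rewrite cat_uniq => /and3P[_ _ /and3P[_ hL _]].
    by rewrite !in_cons negb_or (gtn_eqF (ltnW h3)) (gtn_eqF bh).
  - move=> j; rewrite in_cons => /orP[/eqP-> // | jbL].
    rewrite inE -mem_theta_tab mem_cat !in_cons.
    by move: jbL; rewrite in_cons => /orP[]->; rewrite ?orbT.
congr (_ :: _); apply: eq_entries => k kN.
by rewrite theta_arm_leg_mem ?entry_neq ?entry_le //; lia.
Qed.

Lemma xi_theta : xi n (theta_tab r b h L) = code h r (2 * n).+2.
Proof.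
have /andP[h3 hN] := theta_heart_bounds.
rewrite /xi /code (iotaDl 1 0) -map_comp; apply/eq_in_map => k; rewrite mem_iota => /andP[_ kN] /=.
rewrite xi_stepE // -[heart _]/h -[arm _]/r leg_theta_tab theta_corner.
by rewrite -theta_arm_leg_mem ?entry_neq ?orbN //= entry_le.
Qed.

Lemma tab_of_xi_theta : tab_of_path (xi n (theta_tab r b h L)) = theta_tab r b h L.
Proof.
have hN := theta_heart_bounds.
rewrite xi_theta /tab_of_path path_heart_code // arm_entries_code // leg_entries_code //.
by rewrite -theta_arm_entries -theta_leg_entries /= drop0.
Qed.

Lemma xi_theta_in_P : in_P n (xi n (theta_tab r b h L)).
Proof.
have [_ rS legS rh bh] := syt_facts; have hN := theta_heart_bounds.
have r1 := theta_arm01; rewrite theta_corner in r1 legS.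
have b1 : 1 < b by case/andP: legS.
have bNr : b \notin r.
  have := uniq_theta_tab; rewrite cat_uniq => /and3P[_ /hasPn/(_ b)].
  by rewrite mem_head => /(_ isT).
rewrite xi_theta; apply/in_PE; split.
- exact: size_code.
- by rewrite count_armstep_code -[n.+1]/(n.+2.-1) -sr {2}theta_arm_entries.
- exact: count_backstep_code.
apply/andP; split.
- apply: (@has_back_prefix_code _ _ _ _ (nth 0 r 1 - 2)) => //; first lia.
  rewrite armstep_code entryE ifT; last lia.
  by rewrite (_ : _.+2 = nth 0 r 1) ?mem_nth ?sr //; lia.
- apply: (@has_back_prefix_code _ _ _ _ (b - 2)) => //; first lia.
  rewrite /= armstep_code entryE ifT; last lia.
  by rewrite (_ : _.+2 = b) //; lia.
Qed.

End ThetaTableau.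

Section PathTableau.

Variables (n : nat) (p : seq step).
Hypothesis pP : in_P n p.

Let leg_p := path_entries (predC armstep) p.

Lemma size_arm_entries : size (path_entries armstep p) = n.+2.
Proof. by have [_ arm1 _ _] := (in_PE n p).1 pP; rewrite size_path_entries arm1. Qed.

Lemma leg_entriesE : leg_p = [:: 1, nth 0 leg_p 1 & drop 2 leg_p] /\ size (drop 2 leg_p) = n.
Proof.
have [sp arm1 _ _] := (in_PE n p).1 pP.
have : size leg_p = n.+2.
  by have := count_predC armstep p; rewrite /leg_p size_path_entries; lia.
by rewrite /leg_p /path_entries; case: (entries _ _ _) => [|l1 D] //= [sD]; rewrite drop0 sD.
Qed.

Lemma tab_of_path_SYT : is_SYT (theta n) (tab_of_path p).
Proof.
have [sp arm1 back1 /andP[armP legP]] := (in_PE n p).1 pP.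
have [eleg sD] := leg_entriesE; move: eleg; rewrite /tab_of_path -/leg_p.
set h := path_heart p; set l1 := nth 0 leg_p 1; set D := drop 2 leg_p => eleg.
have hN : 2 < h <= (2 * n).+4 by rewrite -sp path_heart_le.
apply/(is_SYT_thetaP _ _ size_arm_entries sD); split.
- apply: (@perm_trans _ (1 :: h :: entries h (size p) (fun k => armstep (nth stE p k))
                           ++ behead leg_p)).
    rewrite eleg; apply/permP => x; rewrite /= drop0 !count_cat /= -/h; lia.
  rewrite -[iota 1 _]/(1 :: iota 2 (2 * n).+3) perm_cons -sp.
  have hp : 1 < h <= (size p).+2 by rewrite sp; lia.
  apply: perm_trans (perm_entries hp).
  by rewrite perm_cons; exact: perm_entriesC.
- exact: sorted_entries.
- by rewrite [nth _ _ 0]/= -eleg; apply: sorted_entries.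
- have [k [kp kh ak]] := back_prefix_witness armP.
  exact: entries_head_lt kp kh ak.
- have [k [kp kh ak]] := back_prefix_witness legP.
  by rewrite /l1 eleg; exact: entries_head_lt kp kh ak.
Qed.

Lemma xi_tab_of_path : xi n (tab_of_path p) = p.
Proof.
have [sp _ back1 _] := (in_PE n p).1 pP; have [_ sD] := leg_entriesE.
rewrite /tab_of_path (xi_theta size_arm_entries sD tab_of_path_SYT).
by rewrite -sp code_path_entries.
Qed.

End PathTableau.

Lemma xi_in_P_cancel n T : is_SYT (theta n) T -> in_P n (xi n T) /\ tab_of_path (xi n T) = T.
Proof.
move=> syt; have [shape _ _ _] := syt.
have [r [b [h [L [eT sr sL]]]]] := theta_shape shape; subst T.
by split; [exact: xi_theta_in_P sr sL syt | exact: tab_of_xi_theta sr sL syt].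
Qed.

Theorem mainTheorem2 (n : nat) :
  (forall T, is_SYT (theta n) T -> in_P n (xi n T)) /\
  (forall T1 T2, is_SYT (theta n) T1 -> is_SYT (theta n) T2 ->
     xi n T1 = xi n T2 -> T1 = T2) /\
  (forall p, in_P n p -> exists T, is_SYT (theta n) T /\ xi n T = p).
Proof.
split; first by move=> T /xi_in_P_cancel[].
split; first by move=> T1 T2 /xi_in_P_cancel[_ E1] /xi_in_P_cancel[_ E2] E; rewrite -E1 -E2 E.
by move=> p pP; exists (tab_of_path p); split; [exact: tab_of_path_SYT | exact: xi_tab_of_path].
Qed.
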